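(* Consider smoothed MaxSat/$k$-Flip on a CNF formula with $n$ variables and $m$ clauses, where each clause weight $w_i$ is drawn independently from a distribution with density $f_i:[0,1]\to[0,\phi]$, and let $B$ be the maximum number of clauses in which any variable occurs. Then the expected maximum number of iterations of local search (over all initial assignments and all improving sequences) is $O(3^{kB}n^k m^2\phi)$, with an absolute hidden constant.
   Context: MaxSat/$k$-Flip: given a CNF formula with clauses $C_1,\dots,C_m$ over Boolean variables $x_1,\dots,x_n$ and clause weights $w_1,\dots,w_m$, the weight of a truth assignment is the total weight of satisfied clauses; the $k$-Flip neighbours of an assignment are those obtained by changing the truth value of at most $k$ variables; a solution is an assignment with no neighbour of strictly larger weight. Local search repeatedly moves to a strictly better neighbour. *)

From HB Require Import structures.
From mathcomp Require Import all_boot all_order all_algebra.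
From mathcomp Require Import all_classical all_reals all_analysis.
Set Implicit Arguments. Unset Strict Implicit. Unset Printing Implicit Defensive.
Import Order.TTheory GRing.Theory Num.Theory.
Local Open Scope ring_scope.
Local Open Scope classical_set_scope.

(* A CNF formula with m clauses over n variables is C : 'I_m -> clause n. *)
Definition literal (n : nat) := ('I_n * bool)%type.
Definition clause (n : nat) := seq (literal n).
Definition assignment (n : nat) := {ffun 'I_n -> bool}.

Definition clause_sat n (c : clause n) (a : assignment n) : bool :=
  has (fun l : literal n => a l.1 == l.2) c.

Definition weight (R : realType) n m (C : 'I_m -> clause n) (w : nat -> R)
    (a : assignment n) : R :=
  \sum_(i < m | clause_sat (C i) a) w i.

Definition kflip_nbr n (k : nat) (a b : assignment n) : bool :=
  (#|[set x : 'I_n | a x != b x]| <= k)%N.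

Definition improving_step (R : realType) n m k (C : 'I_m -> clause n)
    (w : nat -> R) (a b : assignment n) : bool :=
  kflip_nbr k a b && (weight C w a < weight C w b).

Definition improving_run (R : realType) n m k (C : 'I_m -> clause n)
    (w : nat -> R) (a0 : assignment n) (s : seq (assignment n)) : bool :=
  path (improving_step k C w) a0 s.

Definition max_iterations (R : realType) n m k (C : 'I_m -> clause n)
    (w : nat -> R) : \bar R :=
  ereal_sup [set ((size s)%:R)%:E | s in
     [set s : seq (assignment n) | exists a0, improving_run k C w a0 s]].

Definition max_occurrences n m (C : 'I_m -> clause n) : nat :=
  \max_(x : 'I_n) #|[set i : 'I_m | x \in [seq l.1 | l <- C i]]|.

(* Expectation of F(w_0, ..., w_{m-1}) where the w_i are independent with
   densities f i on [0,1]: the iterated Lebesgue integral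
   \int_[0,1] ... \int_[0,1] F(w) * prod_i f_i(w_i) dw. *)
Fixpoint expect_indep (R : realType) (m : nat) (f : nat -> R -> R)
    (F : (nat -> R) -> \bar R) : \bar R :=
  match m with
  | 0 => F (fun _ => 0)
  | m'.+1 =>
      (\int[@lebesgue_measure R]_(x in `[0%R, 1%R])
         ((f m' x)%:E * expect_indep m' f
            (fun w => F (fun i => if i == m' then x else w i))))%E
  end.

Definition density_bounded (R : realType) (f : R -> R) (phi : R) : Prop :=
  [/\ measurable_fun (`[0%R, 1%R] : set R) f,
      (forall x, x \in `[0%R, 1%R] -> 0 <= f x <= phi) &
      (\int[@lebesgue_measure R]_(x in `[0%R, 1%R]) (f x)%:E = 1)%E].

(* Fix the weights.  A run of N >= 1 improving steps gains at most m in total,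
   so one of its steps a -> b gains g <= m / N; moreover N < 2^m, because the
   sets of satisfied clauses along a run are distinct.  Pick the dyadic scale
   s <= m with g <= m / 2^s and N <= 2^(s+1).  The gain g is a combination
   with coefficients in {-1, 0, 1} of the weights of the at most kB clauses
   containing a flipped variable, hence N is bounded by the sum, over the
   n^k lists of flipped variables, the 3^(kB) sign patterns and the m + 1
   scales, of 2^(s+1) [0 < g <= m / 2^s].  Integrating out the first weight
   with a nonzero coefficient, each indicator has probability at most
   phi m / 2^s, so each term has expectation at most 2 m phi, and the total
   is at most 2 (m + 1) m phi n^k 3^(kB) <= 4 3^(kB) n^k m^2 phi. *)
From mathcomp Require Import all_boot all_order all_algebra.
From mathcomp Require Import all_classical all_reals all_analysis.
From mathcomp Require Import measurable_realfun.
From mathcomp Require Import ring lra zify.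
Import Order.TTheory GRing.Theory Num.Theory.
Local Open Scope ring_scope.
Local Open Scope classical_set_scope.
Set Implicit Arguments. Unset Strict Implicit. Unset Printing Implicit Defensive.

Definition upd (T : Type) (w : nat -> T) (l : nat) (x : T) : nat -> T :=
  fun i => if i == l then x else w i.

Lemma updC (T : Type) (w : nat -> T) a b x y : a != b ->
  upd (upd w a x) b y = upd (upd w b y) a x.
Proof.
move=> ab; apply/funext => i; rewrite /upd.
by case: (eqVneq i a) => [->|//]; rewrite (negbTE ab).
Qed.

Lemma upd_upd (T : Type) (w : nat -> T) a x y : upd (upd w a x) a y = upd w a y.
Proof. by apply/funext => i; rewrite /upd; case: (i == a). Qed.

Section densities.
Variable R : realType.
Local Notation mu := (@lebesgue_measure R).
Local Notation I01 := (`[0%R, 1%R] : set R).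

(* The integral of a nonnegative function is a supremum over simple
   minorants, so it is monotone without any measurability assumption. *)
Lemma ge0_le_integral_nomeas (D : set R) (f1 f2 : R -> \bar R) :
  (forall x, D x -> (0 <= f1 x)%E) -> (forall x, D x -> (f1 x <= f2 x)%E) ->
  (\int[mu]_(x in D) f1 x <= \int[mu]_(x in D) f2 x)%E.
Proof.
move=> f10 f12.
have f20 x : D x -> (0 <= f2 x)%E by move=> Dx; exact: le_trans (f10 x Dx) (f12 x Dx).
rewrite !ge0_integralE //.
apply: ge_ereal_sup => _ [h /= hf <-]; apply: ereal_sup_ubound; exists h => //= x.
apply: (le_trans (hf x)); rewrite /patch; case: ifP => // /[1!inE] Dx; exact: f12.
Qed.

Definition in_unit_cube (w : nat -> R) := forall i, 0 <= w i <= 1.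

Lemma in_unit_cube0 : in_unit_cube (fun=> 0%R).
Proof. by move=> i; rewrite lexx ler01. Qed.

Lemma in_unit_cube_upd (w : nat -> R) l x :
  in_unit_cube w -> I01 x -> in_unit_cube (upd w l x).
Proof. by move=> w01 x01 i; rewrite /upd; case: ifP; rewrite /= ?in_itv. Qed.

Lemma density_ge0 (g : R -> R) phi x : density_bounded g phi -> I01 x -> 0 <= g x.
Proof. by case=> _ g01 _ /mem_set/g01/andP[]. Qed.

Lemma density_bound_ge0 (g : R -> R) phi : density_bounded g phi -> 0 <= phi.
Proof.
case=> _ g01 _; have /mem_set/g01/andP[g0 gphi] : I01 0 by rewrite /= in_itv /= lexx ler01.
exact: le_trans g0 gphi.
Qed.

Lemma integral_density_mulr (g : R -> R) phi (c : \bar R) :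
  density_bounded g phi -> (0 <= c)%E ->
  (\int[mu]_(x in I01) ((g x)%:E * c) = c)%E.
Proof.
move=> gd c0; case: (gd) => mg _ g1; rewrite ge0_integralZr //.
- by rewrite g1 mul1e.
- exact/measurable_EFinP.
- by move=> x x01; rewrite lee_fin (density_ge0 gd).
Qed.

Lemma integral_density_indic_le (g : R -> R) phi (A : set R) (K : R) :
  density_bounded g phi -> measurable A -> 0 <= K ->
  (\int[mu]_(y in I01) ((g y)%:E * (K * \1_A y)%:E) <= (phi * K)%:E * mu A)%E.
Proof.
move=> gd mA K0; have phiK0 : 0 <= phi * K by rewrite mulr_ge0 ?(density_bound_ge0 gd).
apply: (@le_trans _ _ (\int[mu]_(y in I01) ((phi * K) * \1_A y)%:E)%E).
  apply: ge0_le_integral_nomeas => y y01; rewrite -EFinM lee_fin.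
    by rewrite !mulr_ge0 // (density_ge0 gd).
  rewrite mulrA ler_wpM2r //; apply: ler_wpM2r => //.
  by case: gd => _ /(_ y (mem_set y01)) /andP[].
under eq_integral do rewrite EFinM.
rewrite ge0_integralZl //; last first.
  by apply: measurableT_comp => //; exact: measurable_indic.
rewrite integral_indic //; apply: lee_wpmul2l; first by rewrite lee_fin.
by apply: le_measure; rewrite ?inE //=; exact: measurableI.
Qed.

Lemma indic_itv_mem (i j : interval R) (x y : R) :
  (x \in i) = (y \in j) -> \1_[set` i] x = \1_[set` j] y :> R.
Proof. by rewrite !indicE !mem_setE => ->. Qed.

Definition window (L : R) : set R := `]0%R, L].

Lemma integral_density_window_le (g : R -> R) phi (c e K L : R) :
  density_bounded g phi -> e = 1 \/ e = -1 -> 0 <= K -> 0 < L ->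
  (\int[mu]_(y in I01) ((g y)%:E * (K * \1_(window L) (c + e * y))%:E)
     <= (phi * K * L)%:E)%E.
Proof.
move=> gd e1 K0 L0.
suff [A mA [muA windowA]] : exists2 A : set R, measurable A & mu A = L%:E /\
    forall y, \1_(window L) (c + e * y) = \1_A y :> R.
  under eq_integral do rewrite windowA.
  by rewrite EFinM -muA; apply: integral_density_indic_le.
case: e1 => ->; [exists `]-c, -c + L] | exists `[c - L, c[]; try exact: measurable_itv.
all: split=> [|y].
1,3: by rewrite lebesgue_measure_itv /= lte_fin ifT -?EFinD; [congr EFin; ring|lra].
all: apply: indic_itv_mem; rewrite !in_itv /=.
all: by apply/idP/idP => /andP[? ?]; apply/andP; split; lra.
Qed.

Section tail_bounds.
Variables (f : nat -> R -> R) (phi : R).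

Lemma expect_indep_ge0 l (F : (nat -> R) -> \bar R) :
  (forall i, (i < l)%N -> density_bounded (f i) phi) ->
  (forall w, in_unit_cube w -> (0 <= F w)%E) -> (0 <= expect_indep l f F)%E.
Proof.
elim: l F => [|l IH] F fd F0 /=; first exact/F0/in_unit_cube0.
apply: integral_ge0 => x x01; apply: mule_ge0.
  by rewrite lee_fin (density_ge0 (fd l _)).
apply: IH => [i il|w w01]; first by apply: fd; rewrite ltnS ltnW.
exact/F0/in_unit_cube_upd.
Qed.

Variables (I : Type) (j : I -> nat) (M : I -> R).
Hypothesis M_ge0 : forall t, 0 <= M t.

Definition tail_bounded (l : nat) (G : I -> (nat -> R) -> \bar R) : Prop :=
  [/\ forall t w, (0 <= G t w)%E,
      forall t w w', (forall i, (j t <= i)%N -> w i = w' i) -> G t w = G t w',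
      forall t (w : nat -> R), measurable_fun I01 (fun y => G t (upd w (j t) y)) &
      forall t (w : nat -> R), (j t < l)%N ->
        (\int[mu]_(y in I01) ((f (j t) y)%:E * G t (upd w (j t) y)) <= (M t)%:E)%E].

Lemma tail_bounded_upd l G x :
  tail_bounded l.+1 G -> tail_bounded l (fun t w => G t (upd w l x)).
Proof.
case=> G0 Gdep Gmeas Gint; split => // [t w w' ww'|t w|t w jtl].
- by apply: Gdep => i ji; rewrite /upd; case: ifP => // _; exact: ww'.
- have [jl|jl] := eqVneq (j t) l.
    rewrite jl (_ : (fun y => _) = cst (G t (upd w l x))); first exact: measurable_cst.
    by apply/funext => y; rewrite upd_upd.
  rewrite (_ : (fun y => _) = fun y => G t (upd (upd w l x) (j t) y)); first exact: Gmeas.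
  by apply/funext => y; rewrite updC.
- under eq_integral do rewrite updC ?neq_ltn ?jtl //.
  by apply: Gint; rewrite ltnS ltnW.
Qed.

Definition tail_integrand l (G : I -> (nat -> R) -> \bar R) t (x : R) : \bar R :=
  if (l <= j t)%N then G t (upd (fun=> 0%R) l x) else (M t)%:E.

Lemma tail_integrand_ge0 l G t x :
  tail_bounded l.+1 G -> (0 <= tail_integrand l G t x)%E.
Proof. by case=> G0 *; rewrite /tail_integrand; case: ifP; rewrite ?lee_fin. Qed.

Lemma tail_integrand_lt l G t x : tail_bounded l.+1 G -> (l < j t)%N ->
  tail_integrand l G t x = G t (fun=> 0%R).
Proof.
case=> _ Gdep _ _ ljt; rewrite /tail_integrand ltnW //; apply: Gdep => i ji.
by rewrite /upd; case: eqP => // il; move: ljt; rewrite -il ltnNge ji.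
Qed.

Lemma measurable_tail_integrand l G t :
  tail_bounded l.+1 G -> measurable_fun I01 (tail_integrand l G t).
Proof.
move=> Gb; case: (ltngtP l (j t)) => [ljt|jtl|ljt].
- rewrite (_ : tail_integrand _ _ _ = cst (G t (fun=> 0%R))); first exact: measurable_cst.
  by apply/funext => x; rewrite tail_integrand_lt.
- by rewrite /tail_integrand leqNgt jtl; exact: measurable_cst.
- case: Gb => _ _ /(_ t (fun=> 0%R)) Gm _; rewrite -ljt in Gm.
  by rewrite /tail_integrand -ljt leqnn.
Qed.

Lemma integral_tail_integrand_le l G t :
  density_bounded (f l) phi -> tail_bounded l.+1 G ->
  (\int[mu]_(x in I01) ((f l x)%:E * tail_integrand l G t x)
     <= if (l < j t)%N then G t (fun=> 0%R) else (M t)%:E)%E.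
Proof.
move=> fd Gb; have [G0 _ _ Gint] := Gb.
case: (ltngtP l (j t)) => [ljt|jtl|ljt].
- under eq_integral do rewrite tail_integrand_lt //.
  by rewrite (integral_density_mulr fd).
- rewrite /tail_integrand; under eq_integral do rewrite leqNgt jtl /=.
  by rewrite (integral_density_mulr fd) // lee_fin.
- by rewrite /tail_integrand ljt leqnn; apply: Gint; rewrite ljt.
Qed.

(* Integrating out the coordinates [l - 1, ..., 0] one at a time: the term
   [G t] survives until coordinate [j t] is reached, where it is replaced by
   [M t]. *)
Lemma expect_indep_le_sum (s : seq I) l G F :
  (forall i, (i < l)%N -> density_bounded (f i) phi) -> tail_bounded l G ->
  (forall w, in_unit_cube w -> (0 <= F w)%E /\ (F w <= \sum_(t <- s) G t w)%E) ->
  (expect_indep l f F <=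
     \sum_(t <- s) (if (l <= j t)%N then G t (fun=> 0%R) else (M t)%:E))%E.
Proof.
elim: l G F => [|l IH] G F fd Gb FG /=; first by case: (FG _ in_unit_cube0).
have fld := fd l (ltnSn l).
have fd' i : (i < l)%N -> density_bounded (f i) phi by move=> il; apply: fd; rewrite ltnS ltnW.
have fl0 x : I01 x -> (0 <= (f l x)%:E)%E by move=> x01; rewrite lee_fin (density_ge0 fld).
have U0 t x : (0 <= tail_integrand l G t x)%E := tail_integrand_ge0 t x Gb.
apply: (@le_trans _ _ (\int[mu]_(x in I01)
    ((f l x)%:E * \sum_(t <- s) tail_integrand l G t x))%E).
  apply: ge0_le_integral_nomeas => x x01.
    apply: mule_ge0; first exact: fl0.
    by apply: expect_indep_ge0 => // w w01; exact: (FG _ (in_unit_cube_upd l w01 x01)).1.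
  apply: lee_wpmul2l; first exact: fl0.
  apply: (IH (fun t w => G t (upd w l x))) => // [|w w01]; first exact: tail_bounded_upd.
  exact: FG (in_unit_cube_upd l w01 x01).
under eq_integral => x x01 do rewrite ge0_sume_distrr //.
rewrite ge0_integral_sum //; last 2 first.
- move=> t; apply: emeasurable_funM; first by case: fld => mf _ _; exact/measurable_EFinP.
  exact: measurable_tail_integrand.
- by move=> t x x01; apply: mule_ge0; [exact: fl0|exact: U0].
by apply: lee_sum => t _; exact: integral_tail_integrand_le.
Qed.

End tail_bounds.
End densities.

Local Close Scope classical_set_scope.

Section signed_sums.
Variables (R : ringType) (m : nat).

(* [1] and [2] encode the coefficients [1] and [-1] of a clause weight in
   the gain of a move, every other value of ['I_3] the coefficient [0]. *)
Definition sign_of (g : 'I_3) : R :=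
  if val g == 1%N then 1 else if val g == 2%N then -1 else 0.

Definition signed_sum (g : {ffun 'I_m -> 'I_3}) (w : nat -> R) : R :=
  \sum_(i < m) sign_of (g i) * w i.

Definition first_nz (g : {ffun 'I_m -> 'I_3}) : nat :=
  find (fun i : 'I_m => val (g i) != 0%N) (enum 'I_m).

Lemma sign_of0 (g : 'I_3) : val g = 0%N -> sign_of g = 0.
Proof. by rewrite /sign_of => ->. Qed.

Lemma sign_of_pm (g : 'I_3) : val g != 0%N -> sign_of g = 1 \/ sign_of g = -1.
Proof. by case: g => [[|[|[|i]]] gi] //= _; rewrite /sign_of /=; [left|right]. Qed.

Lemma before_first_nz (g : {ffun 'I_m -> 'I_3}) (i : 'I_m) :
  (i < first_nz g)%N -> val (g i) = 0%N.
Proof. by move=> /(before_find i); rewrite nth_ord_enum => /negbFE/eqP. Qed.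

Lemma first_nz_neq0 (g : {ffun 'I_m -> 'I_3}) (h : (first_nz g < m)%N) :
  val (g (Ordinal h)) != 0%N.
Proof.
have has_nz : has (fun i : 'I_m => val (g i) != 0%N) (enum 'I_m).
  by rewrite has_find size_enum_ord.
have := nth_find (Ordinal h) has_nz.
by rewrite (_ : nth _ _ _ = Ordinal h) //; apply: val_inj; rewrite /= nth_enum_ord.
Qed.

Lemma signed_sum0 (g : {ffun 'I_m -> 'I_3}) : signed_sum g (fun=> 0%R) = 0.
Proof. by rewrite /signed_sum big1 // => i _; rewrite mulr0. Qed.

Lemma signed_sum_first_nz (g : {ffun 'I_m -> 'I_3}) (w w' : nat -> R) :
  (forall i, (first_nz g <= i)%N -> w i = w' i) -> signed_sum g w = signed_sum g w'.
Proof.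
move=> ww'; apply: eq_bigr => i _.
case: (ltnP i (first_nz g)) => gi; last by rewrite ww'.
by rewrite sign_of0 ?mul0r // before_first_nz.
Qed.

Lemma signed_sum_upd (g : {ffun 'I_m -> 'I_3}) (w : nat -> R) j y :
  signed_sum g (upd w j y) =
    signed_sum g (upd w j 0) + (\sum_(i < m | val i == j) sign_of (g i)) * y.
Proof.
rewrite /signed_sum mulr_suml [X in _ + X]big_mkcond -big_split /=; apply: eq_bigr => i _.
by rewrite /upd; case: ifP => _; rewrite ?mulr0 ?mul0r ?add0r ?addr0.
Qed.

Lemma sum_sign_of_first_nz (g : {ffun 'I_m -> 'I_3}) (h : (first_nz g < m)%N) :
  \sum_(i < m | val i == first_nz g) sign_of (g i) = sign_of (g (Ordinal h)).
Proof. by rewrite (big_pred1 (Ordinal h)) // => i; rewrite -val_eqE. Qed.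

End signed_sums.

Section flips.
Variables (n m k : nat) (C : 'I_m -> clause n).

Definition occurrences (x : 'I_n) : {set 'I_m} := [set i | x \in [seq l.1 | l <- C i]].

Definition touched (u : {ffun 'I_k -> 'I_n}) : {set 'I_m} :=
  \bigcup_(i < k) occurrences (u i).

Lemma card_touched u : (#|touched u| <= k * max_occurrences C)%N.
Proof.
apply: (@leq_trans (\sum_(i < k) #|occurrences (u i)|)).
  apply: (big_ind2 (fun (A : {set 'I_m}) x => #|A| <= x)%N) => [|A1 x1 A2 x2 A1x1 A2x2|//].
    by rewrite cards0.
  exact: leq_trans (leq_card_setU A1 A2).1 (leq_add A1x1 A2x2).
rewrite -[k in (k * _)%N]card_ord -sum_nat_const; apply: leq_sum => i _.
apply: leq_trans (leq_bigmax (u i)); apply: eq_leq; apply: eq_card => c.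
by rewrite inE; apply/idP/idP => [|/set_mem //]; exact: mem_set.
Qed.

Lemma kflip_nbrE (a b : assignment n) :
  kflip_nbr k a b = (#|[set x | a x != b x]| <= k)%N.
Proof.
congr (_ <= k)%N; apply: eq_card => x; rewrite inE.
by apply/idP/idP => [/set_mem|/mem_set].
Qed.

Lemma kflip_nbr_cover (a b : assignment n) : kflip_nbr k a b -> a != b ->
  exists u : {ffun 'I_k -> 'I_n}, forall x, a x != b x -> exists i, u i = x.
Proof.
rewrite kflip_nbrE; set D := [set x | a x != b x] => Dk ab.
have [x0 Dx0] : exists x0, x0 \in D.
  apply: contrapT => noD; move/eqP: ab; apply; apply/ffunP => x.
  by apply/eqP/negPn/negP => abx; apply: noD; exists x; rewrite inE.
exists [ffun i : 'I_k => nth x0 (enum D) i] => x abx.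
have xD : x \in D by rewrite inE.
have xk : (index x (enum D) < k)%N by rewrite (leq_trans _ Dk) // cardE index_mem mem_enum.
by exists (Ordinal xk); rewrite ffunE /= nth_index // mem_enum.
Qed.

Definition gain_signs (a b : assignment n) : {ffun 'I_m -> 'I_3} :=
  [ffun i => if clause_sat (C i) b && ~~ clause_sat (C i) a then inord 1
             else if clause_sat (C i) a && ~~ clause_sat (C i) b then inord 2
             else ord0].

Lemma gain_signs_support (a b : assignment n) (u : {ffun 'I_k -> 'I_n}) :
  (forall x, a x != b x -> exists i, u i = x) ->
  gain_signs a b \in pffun_on ord0 (touched u) predT.
Proof.
move=> cover; apply/pffun_onP; split=> [|//]; apply/fintype.subsetP => i.
rewrite inE /= => gi; have sat_ab : clause_sat (C i) a != clause_sat (C i) b.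
  by apply: contra gi; rewrite ffunE => /eqP->; case: clause_sat; rewrite ?andbF.
have [l lCi abl] : exists2 l, l \in C i & a l.1 != b l.1.
  apply: contrapT => no_l; case/eqP: sat_ab; apply: eq_in_has => l lCi /=.
  by case: (eqVneq (a l.1) (b l.1)) => [->//|abl]; case: no_l; exists l.
have [x ux] := cover _ abl; apply/bigcupP; exists x => //.
by rewrite inE ux; apply/mapP; exists l.
Qed.

Definition event := ({ffun 'I_k -> 'I_n} * ({ffun 'I_m -> 'I_3} * nat))%type.

(* An event [(u, g, s)] records the flipped variables [u], the signs [g] of
   the clause weights in the gain, and the scale [s] of the gain. *)
Definition events : seq event :=
  [seq (u, gs) | u <- enum {: {ffun 'I_k -> 'I_n}},
     gs <- [seq (g, s) | g <- enum (pffun_on ord0 (touched u) predT), s <- iota 0 m.+1]].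

Lemma size_events : (size events <= n ^ k * 3 ^ (k * max_occurrences C) * m.+1)%N.
Proof.
rewrite size_allpairs_dep sumnE big_map.
apply: (@leq_trans (\sum_(u <- enum {: {ffun 'I_k -> 'I_n}})
    3 ^ (k * max_occurrences C) * m.+1)%N).
  apply: leq_sum => u _; rewrite size_allpairs size_iota -cardE card_pffun_on leq_mul2r.
  by rewrite card_ord leq_pexp2l ?card_touched ?orbT.
by rewrite big_const_seq count_predT iter_addn_0 -cardE card_ffun !card_ord mulnC mulnA.
Qed.

End flips.

Section improving_runs.
Variables (R : realType) (n m k : nat) (C : 'I_m -> clause n).

Lemma weightE (w : nat -> R) a :
  weight C w a = \sum_(i < m) (clause_sat (C i) a)%:R * w i.
Proof.
rewrite /weight big_mkcond /=; apply: eq_bigr => i _.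
by case: (clause_sat (C i) a); rewrite ?mul1r ?mul0r.
Qed.

Lemma sign_of_gain_signs a b i :
  sign_of R (gain_signs C a b i) = (clause_sat (C i) b)%:R - (clause_sat (C i) a)%:R.
Proof.
rewrite /sign_of ffunE.
by case: (clause_sat (C i) b); case: (clause_sat (C i) a); rewrite /= ?inordK ?subrr ?subr0 ?sub0r.
Qed.

Lemma signed_sum_gain_signs (w : nat -> R) a b :
  signed_sum (gain_signs C a b) w = weight C w b - weight C w a.
Proof.
rewrite /signed_sum !weightE -sumrB; apply: eq_bigr => i _.
by rewrite sign_of_gain_signs mulrBl.
Qed.

Lemma weight_ge0 (w : nat -> R) a : in_unit_cube w -> 0 <= weight C w a.
Proof. by move=> w01; apply: sumr_ge0 => i _; case/andP: (w01 i). Qed.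

Lemma weight_le (w : nat -> R) a : in_unit_cube w -> weight C w a <= m%:R.
Proof.
move=> w01; rewrite weightE -[m in m%:R]card_ord -sumr_const.
by apply: ler_sum => i _; case/andP: (w01 i); case: (clause_sat _ _); rewrite ?mul1r ?mul0r.
Qed.

(* The weights, hence the sets of satisfied clauses, are pairwise distinct
   along an improving run. *)
Lemma improving_run_size_lt (w : nat -> R) a0 s :
  improving_run k C w a0 s -> (size s < 2 ^ m)%N.
Proof.
move=> run.
have sorted_w : sorted <%R (map (weight C w) (a0 :: s)).
  by rewrite /= path_map; apply: sub_path run => a b /andP[].
have uniq_sat : uniq [seq [set i | clause_sat (C i) a] | a <- a0 :: s].
  apply: (@map_uniq _ _ (fun S : {set 'I_m} => \sum_(i in S) w i)); rewrite -map_comp.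
  rewrite (eq_map (g := weight C w)) ?(sorted_uniq lt_trans ltxx sorted_w) // => a.
  by rewrite /weight; apply: eq_bigl => i; rewrite inE.
have := uniq_leq_size uniq_sat (s2 := enum (powerset [set: 'I_m])) _.
rewrite size_map /= -cardE card_powerset cardsT card_ord; apply=> S _.
by rewrite mem_enum powersetE finset.subsetT.
Qed.

Lemma improving_run_gain_gt (w : nat -> R) (d : R) a0 s :
  (forall a b, improving_step k C w a b -> d < weight C w b - weight C w a) ->
  improving_run k C w a0 s -> s != [::] ->
  (size s)%:R * d < weight C w (last a0 s) - weight C w a0.
Proof.
move=> step_gt; elim: s a0 => [//|b s IH] a0 /= /andP[ab run] _.
have [->|s0] := eqVneq s [::]; first by rewrite mul1r; exact: step_gt.
rewrite -addn1 natrD mulrDl mul1r -[X in _ < X](subrKA (weight C w b)).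
by apply: ltrD; [exact: IH|exact: step_gt].
Qed.

Lemma improving_run_small_step (w : nat -> R) a0 s :
  in_unit_cube w -> improving_run k C w a0 s -> s != [::] ->
  exists a b, improving_step k C w a b /\
    (size s)%:R * (weight C w b - weight C w a) <= m%:R.
Proof.
move=> w01 run s0; apply: contrapT => no_small.
have N0 : 0 < (size s)%:R :> R by rewrite ltr0n lt0n size_eq0.
have step_gt a b : improving_step k C w a b ->
    m%:R / (size s)%:R < weight C w b - weight C w a.
  move=> ab; rewrite ltr_pdivrMr // mulrC ltNge; apply/negP => small.
  by apply: no_small; exists a, b.
have := improving_run_gain_gt step_gt run s0; rewrite mulrCA divff ?mulr1 ?gt_eqF //.
apply/negP; rewrite -leNgt -[m%:R]subr0.
by apply: lerB; [exact: weight_le|exact: weight_ge0].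
Qed.

End improving_runs.

Lemma dyadic_scale (R : realFieldType) (m N : nat) (g M : R) :
  (0 < N < 2 ^ m)%N -> 0 < g -> N%:R * g <= M ->
  exists s, [/\ (s <= m)%N, g <= M / 2 ^+ s & N%:R <= (2 : R) ^+ s.+1].
Proof.
move=> /andP[N0 Nm] g0 NgM.
pose P s := ((2 : R) ^+ s * g <= M) && (s <= m)%N.
have P0 : P 0%N.
  by rewrite /P expr0 mul1r leq0n andbT (le_trans _ NgM) // ler_peMl ?(ltW g0) ?ler1n.
have ubP s : P s -> (s <= m)%N by case/andP.
have [s /andP[sgM sm] smax] := ex_maxnP (ex_intro P 0%N P0) ubP.
exists s; split => //; first by rewrite ler_pdivlMr ?exprn_gt0 // mulrC.
case: (ltngtP s m) sm => // [sltm|->] _; last first.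
  by rewrite (le_trans (ltW _) (_ : (2 ^ m)%:R <= _)) ?ltr_nat // natrX ler_eXn2l ?ltr1n.
have : ~~ P s.+1 by apply/negP => /smax; rewrite ltnn.
rewrite /P sltm andbT -ltNge => Mlt.
by rewrite -(ler_pM2r g0) ltW // (le_lt_trans NgM).
Qed.

Lemma ler_sum_mem (R : numDomainType) (I : eqType) (s : seq I) (F : I -> R) t :
  t \in s -> (forall i, 0 <= F i) -> F t <= \sum_(i <- s) F i.
Proof.
by move=> ts F0; rewrite (perm_big _ (perm_to_rem ts)) big_cons lerDl sumr_ge0.
Qed.

Section event_bounds.
Variables (R : realType) (n m k : nat).

Definition event_bound (t : event n m k) (w : nat -> R) : R :=
  2 ^+ t.2.2.+1 * \1_(window (m%:R / 2 ^+ t.2.2)) (signed_sum t.2.1 w).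

Lemma event_bound_ge0 t w : 0 <= event_bound t w.
Proof. by rewrite /event_bound mulr_ge0 // indicE. Qed.

Lemma event_bound0 t : event_bound t (fun=> 0%R) = 0.
Proof. by rewrite /event_bound signed_sum0 indicE mem_setE in_itv /= ltxx mulr0. Qed.

Lemma max_iterations_le_events (C : 'I_m -> clause n) (w : nat -> R) : in_unit_cube w ->
  (max_iterations k C w <= \sum_(t <- events k C) (event_bound t w)%:E)%E.
Proof.
move=> w01; apply: ge_ereal_sup => _ [s [a0 run] <-].
rewrite sumEFin lee_fin.
have [->|s0] := eqVneq s [::]; first by rewrite sumr_ge0 // => t _; exact: event_bound_ge0.
have [a [b [/andP[ab_k ab_lt] small]]] := improving_run_small_step w01 run s0.
have ab_ne : a != b by apply: contraTneq ab_lt => ->; rewrite ltxx.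
have [u cover] := kflip_nbr_cover ab_k ab_ne.
have gain0 : 0 < weight C w b - weight C w a by rewrite subr_gt0.
have N0 : (0 < size s < 2 ^ m)%N by rewrite lt0n size_eq0 s0 (improving_run_size_lt run).
have [sc [scm gain_le N_le]] := dyadic_scale N0 gain0 small.
have t_in : (u, (gain_signs C a b, sc)) \in events k C.
  apply/allpairsPdep; exists u, (gain_signs C a b, sc); rewrite mem_enum; split=> //.
  apply/allpairsP; exists (gain_signs C a b, sc); rewrite mem_enum mem_iota ltnS.
  by rewrite gain_signs_support.
apply: le_trans (ler_sum_mem t_in (event_bound_ge0 ^~ w)).
by rewrite /event_bound /= signed_sum_gain_signs indicE mem_setE in_itv /= gain0 gain_le mulr1.
Qed.

Variables (f : nat -> R -> R) (phi : R).
Hypothesis f_density : forall i, (i < m)%N -> density_bounded (f i) phi.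

Lemma integral_event_bound_le (t : event n m k) w : (first_nz t.2.1 < m)%N ->
  (\int[lebesgue_measure]_(y in `[0%R, 1%R])
     ((f (first_nz t.2.1) y)%:E * (event_bound t (upd w (first_nz t.2.1) y))%:E)
   <= (2 * m%:R * phi)%:E)%E.
Proof.
case: t => [u [g s]] /= gm; rewrite /event_bound /=.
under eq_integral do rewrite signed_sum_upd (sum_sign_of_first_nz _ gm).
have K0 : 0 <= 2 ^+ s.+1 :> R by rewrite exprn_ge0.
have L0 : 0 < m%:R / 2 ^+ s :> R by rewrite divr_gt0 ?exprn_gt0 // ltr0n (leq_ltn_trans _ gm).
apply: le_trans (integral_density_window_le _ (f_density gm)
  (sign_of_pm _ (first_nz_neq0 gm)) K0 L0) _.
by rewrite lee_fin exprS le_eqVlt; apply/orP; left; apply/eqP; field; exact: expf_neq0.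
Qed.

Lemma event_bound_tail_bounded :
  tail_bounded f (fun t : event n m k => first_nz t.2.1) (fun=> 2 * m%:R * phi) m
    (fun t w => (event_bound t w)%:E).
Proof.
split=> [t w|t w w' ww'|[u [g s]] w|t w]; rewrite ?lee_fin.
- exact: event_bound_ge0.
- by rewrite /event_bound (signed_sum_first_nz ww').
- pose c := signed_sum g (upd w (first_nz g) 0).
  pose e := \sum_(i < m | val i == first_nz g) sign_of R (g i).
  rewrite /event_bound /= (_ : (fun y => _) =
      fun y => (2 ^+ s.+1 * \1_(window (m%:R / 2 ^+ s)) (c + e * y))%:E); last first.
    by apply/funext => y; rewrite signed_sum_upd.
  apply/measurable_EFinP; apply: measurable_funM; first exact: measurable_cst.
  apply: measurableT_comp; first exact: measurable_indic (measurable_itv _).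
  apply: measurable_funD; first exact: measurable_cst.
  by apply: measurable_funM; [exact: measurable_cst|exact: measurable_id].
- exact: integral_event_bound_le.
Qed.

End event_bounds.

Lemma sum_events_le (R : realType) n m k (C : 'I_m -> clause n) (phi : R) :
  0 <= 2 * m%:R * phi ->
  \sum_(t <- events k C) 2 * m%:R * phi
    <= 4 * 3 ^+ (k * max_occurrences C) * n%:R ^+ k * m%:R ^+ 2 * phi.
Proof.
move=> M0; rewrite big_const_seq count_predT iter_addr addr0.
have [m_eq0|m_gt0] := posnP m.
  by rewrite (_ : m%:R = 0) ?m_eq0 // !mulr0 mul0r mul0rn expr0n /= mulr0 mul0r.
pose A := (n ^ k * 3 ^ (k * max_occurrences C))%N.
have size_le : (size (events k C) <= 2 * A * m)%N by rewrite (leq_trans (size_events k C)); nia.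
rewrite -[leLHS]mulr_natr (le_trans (ler_wpM2l M0 (_ : _ <= (2 * A * m)%:R))) ?ler_nat //.
by rewrite !natrM !natrX le_eqVlt; apply/orP; left; apply/eqP; ring.
Qed.

Theorem mainTheorem10 :
  exists c : nat, forall (R : realType) (n m k : nat) (C : 'I_m -> clause n)
    (f : nat -> R -> R) (phi : R),
    (forall i, (i < m)%N -> density_bounded (f i) phi) ->
    (expect_indep m f (fun w => max_iterations k C w)
      <= (c%:R * 3 ^+ (k * max_occurrences C) * n%:R ^+ k * m%:R ^+ 2 * phi)%:E)%E.
Proof.
exists 4%N => R n m k C f phi f_density.
have M0 : 0 <= 2 * m%:R * phi.
  have [->|m_gt0] := posnP m; first by rewrite mulr0 mul0r.
  by rewrite !mulr_ge0 // (density_bound_ge0 (f_density 0%N m_gt0)).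
apply: (le_trans (expect_indep_le_sum (M := fun=> _) (s := events k C) (fun=> M0)
  f_density (event_bound_tail_bounded n k f_density) _)).
  move=> w w01; split; last exact: max_iterations_le_events.
  by apply: ereal_sup_ubound; exists [::] => //; exists [ffun => false].
apply: (@le_trans _ _ (\sum_(t <- events k C) (2 * m%:R * phi)%:E)%E).
  by apply: lee_sum => t _; case: ifP => _; rewrite ?event_bound0 lee_fin.
by rewrite sumEFin lee_fin sum_events_le.
Qed.
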